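(* Let $n$ be a positive integer, let $f\in C[0,1]$ with $p=P_{\mathcal{P}_n}(f)$, and let $\mu\in C^*[0,1]$ satisfy $\langle\mu,f\rangle\neq 0$. Then: (i) for every $\gamma\in\mathcal{P}_n^\perp$, $\mu\notin\widehat{D}^*P_{\mathcal{P}_n}(f)(\gamma)$; (ii) if $\mu\in\mathcal{P}_n^\perp$, then $\mu$ is not a fixed point of $\widehat{D}^*P_{\mathcal{P}_n}(f)$, i.e. $\mu\notin\widehat{D}^*P_{\mathcal{P}_n}(f)(\mu)$.
   Context: $C[0,1]$ is the Banach space of continuous real-valued functions on $[0,1]$ with the maximum norm $\|f\|=\max_{0\le t\le 1}|f(t)|$. For a nonnegative integer $n$, $\mathcal{P}_n\subseteq C[0,1]$ denotes the closed subspace of real polynomials of degree at most $n$. The metric projection $P_{\mathcal{P}_n}:C[0,1]\to\mathcal{P}_n$ maps $f$ to the unique $p\in\mathcal{P}_n$ with $\|f-p\|=\min_{q\in\mathcal{P}_n}\|f-q\|$ (it is single-valued and continuous). The dual $C^*[0,1]$ is identified with the space of real regular countably additive Borel signed measures $\mu$ on $[0,1]$, with pairing $\langle\mu,f\rangle=\int_0^1 f(t)\,\mu(dt)$. $\mathcal{P}_n^\perp=\{\mu\in C^*[0,1]:\langle\mu,q\rangle=0\text{ for every }q\in\mathcal{P}_n\}$. For $f\in C[0,1]$ and $\mu\in C^*[0,1]$, the Mordukhovich derivative (coderivative) of $P_{\mathcal{P}_n}$ at $f$ applied to $\mu$ is the set $$\widehat{D}^*P_{\mathcal{P}_n}(f)(\mu)=\Big\{\varphi\in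 C^*[0,1]:\ \limsup_{g\to f,\ g\neq f}\frac{\langle\varphi,g-f\rangle-\langle\mu,P_{\mathcal{P}_n}(g)-P_{\mathcal{P}_n}(f)\rangle}{\|g-f\|+\|P_{\mathcal{P}_n}(g)-P_{\mathcal{P}_n}(f)\|}\le 0\Big\}.$$ A fixed point of the set-valued map $\widehat{D}^*P_{\mathcal{P}_n}(f):C^*[0,1]\rightrightarrows C^*[0,1]$ is a $\varphi$ with $\varphi\in\widehat{D}^*P_{\mathcal{P}_n}(f)(\varphi)$. *)

From Stdlib Require Import Reals ClassicalEpsilon.
From Coquelicot Require Import Coquelicot.
Open Scope R_scope.

(* Elements of C[0,1] are represented by functions R -> R that are continuous
   on [0,1]; only their values on [0,1] ever matter. *)
Definition I01 (x : R) : Prop := 0 <= x <= 1.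

Definition cont01 (g : R -> R) : Prop :=
  forall x, I01 x -> forall eps, 0 < eps -> exists delta, 0 < delta /\
    forall y, I01 y -> Rabs (y - x) < delta -> Rabs (g y - g x) < eps.

Definition supnorm (g : R -> R) : R :=
  real (Lub_Rbar (fun y => exists t, I01 t /\ y = Rabs (g t))).

Definition fsub (g h : R -> R) : R -> R := fun x => g x - h x.

Definition isPoly (n : nat) (p : R -> R) : Prop :=
  exists c : nat -> R, forall x, I01 x -> p x = sum_f_R0 (fun k => c k * x ^ k) n.

Definition best_approx (n : nat) (g p : R -> R) : Prop :=
  isPoly n p /\ forall q, isPoly n q -> supnorm (fsub g p) <= supnorm (fsub g q).

(* The metric projection P_{P_n}: a (the, by Haar uniqueness) best approximant. *)
Definition proj (n : nat) (g : R -> R) : R -> R :=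
  epsilon (inhabits (fun _ : R => 0)) (fun p => best_approx n g p).

Definition dual (phi : (R -> R) -> R) : Prop :=
  (forall g h, cont01 g -> cont01 h -> phi (fun x => g x + h x) = phi g + phi h) /\
  (forall a g, cont01 g -> phi (fun x => a * g x) = a * phi g) /\
  (exists M, forall g, cont01 g -> Rabs (phi g) <= M * supnorm g).

Definition perp (n : nat) (mu : (R -> R) -> R) : Prop :=
  dual mu /\ forall q, isPoly n q -> mu q = 0.

(* phi \in \hat D^* P_{P_n}(f)(mu): the limsup over g -> f, g <> f, of the
   quotient is <= 0, unfolded in epsilon-delta form. *)
Definition coderiv (n : nat) (f : R -> R) (mu phi : (R -> R) -> R) : Prop :=
  dual phi /\
  forall eps, 0 < eps -> exists delta, 0 < delta /\
    forall g, cont01 g -> 0 < supnorm (fsub g f) < delta ->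
      (phi (fsub g f) - mu (fsub (proj n g) (proj n f))) /
        (supnorm (fsub g f) + supnorm (fsub (proj n g) (proj n f))) <= eps.

(* Along the ray g = (1 + s) f the metric projection is homogeneous, P (g) = (1 + s) P (f),
   because best approximations from P_n exist and are unique.  Since gamma annihilates
   P (g) - P (f), the coderivative quotient at g equals s <mu, f> / (|s| (||f|| + ||P f||)),
   a positive constant when s has the sign of <mu, f>; so its limsup cannot be <= 0.
   Uniqueness (Haar): the error of the midpoint of two distinct best approximations
   peaks only where they agree, a finite set; a polynomial interpolating the error there
   gives, by Kolmogorov's criterion, a strictly better approximation.
   Existence: adjoining one monomial at a time, the distance from g - t x^k to P_(k-1)
   is 1-Lipschitz and coercive in t, hence attains its minimum. *)

From Stdlib Require Import Reals Lra Lia List ClassicalEpsilon Classical FunctionalExtensionality.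
From Coquelicot Require Import Coquelicot.
Open Scope R_scope.

Lemma I01_0 : I01 0.
Proof. unfold I01; lra. Qed.

Lemma I01_1 : I01 1.
Proof. unfold I01; lra. Qed.

Lemma supnorm_spec (g : R -> R) (M : R) :
  (forall x, I01 x -> Rabs (g x) <= M) ->
  (forall x, I01 x -> Rabs (g x) <= supnorm g) /\ supnorm g <= M.
Proof.
  intros HM; unfold supnorm.
  set (S := fun y => exists t, I01 t /\ y = Rabs (g t)).
  destruct (Lub_Rbar_correct S) as [Hub Hlub].
  assert (Hle : Rbar_le (Lub_Rbar S) (Finite M)).
  { apply Hlub; intros y [t [Ht ->]]; simpl; auto. }
  assert (Hge : Rbar_le (Finite (Rabs (g 0))) (Lub_Rbar S)).
  { apply Hub; exists 0; split; [apply I01_0 | reflexivity]. }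
  destruct (Lub_Rbar S) as [r | |]; simpl in *; try contradiction.
  split; [| exact Hle].
  intros x Hx; apply (Hub (Rabs (g x))); exists x; split; [exact Hx | reflexivity].
Qed.

Lemma supnorm_le (g : R -> R) (M : R) :
  (forall x, I01 x -> Rabs (g x) <= M) -> supnorm g <= M.
Proof. intros H; apply (supnorm_spec g M H). Qed.

Lemma supnorm_ext (g h : R -> R) :
  (forall x, I01 x -> g x = h x) -> supnorm g = supnorm h.
Proof.
  intros H; unfold supnorm; f_equal; apply Lub_Rbar_eqset.
  intros y; split; intros [t [Ht ->]]; exists t; split; auto; rewrite H; auto.
Qed.

Lemma supnorm_nonneg (g : R -> R) : 0 <= supnorm g.
Proof.
  unfold supnorm.
  set (S := fun y => exists t, I01 t /\ y = Rabs (g t)).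
  destruct (Lub_Rbar_correct S) as [Hub _].
  assert (Hge : Rbar_le (Finite (Rabs (g 0))) (Lub_Rbar S)).
  { apply Hub; exists 0; split; [apply I01_0 | reflexivity]. }
  pose proof (Rabs_pos (g 0)).
  destruct (Lub_Rbar S); simpl in *; lra.
Qed.

Definition clamp01 (x : R) : R := Rmax 0 (Rmin x 1).

Lemma clamp01_I01 (x : R) : I01 (clamp01 x).
Proof. unfold clamp01, I01, Rmax, Rmin; repeat destruct Rle_dec; lra. Qed.

Lemma clamp01_id (x : R) : I01 x -> clamp01 x = x.
Proof. unfold clamp01, I01, Rmax, Rmin; repeat destruct Rle_dec; lra. Qed.

Lemma clamp01_lipschitz (x y : R) : Rabs (clamp01 x - clamp01 y) <= Rabs (x - y).
Proof.
  unfold clamp01, Rmax, Rmin; repeat destruct Rle_dec;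
    unfold Rabs; repeat destruct Rcase_abs; lra.
Qed.

Lemma cont01_extend (g : R -> R) :
  cont01 g -> exists G, continuity G /\ forall x, I01 x -> g x = G x.
Proof.
  intros Hg; exists (fun x => g (clamp01 x)); split.
  - intros c eps Heps.
    destruct (Hg (clamp01 c) (clamp01_I01 c) eps Heps) as [d [Hd Hd']].
    exists d; split; [lra |]; intros x [_ Hx]; simpl in *; unfold R_dist in *.
    apply Hd'; [apply clamp01_I01 |].
    pose proof (clamp01_lipschitz x c); lra.
  - intros x Hx; rewrite clamp01_id; auto.
Qed.

Lemma cont01_of_continuity (G g : R -> R) :
  continuity G -> (forall x, I01 x -> g x = G x) -> cont01 g.
Proof.
  intros HG Heq x Hx eps Heps.
  destruct (HG x eps Heps) as [d [Hd Hd']].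
  exists d; split; [lra |]; intros y Hy Hyx.
  rewrite !Heq by auto.
  destruct (Req_dec y x) as [-> | Hne].
  - rewrite Rminus_diag, Rabs_R0; lra.
  - apply (Hd' y); repeat split; auto.
Qed.

Lemma cont01_ext (g h : R -> R) :
  cont01 g -> (forall x, I01 x -> g x = h x) -> cont01 h.
Proof.
  intros Hg E; destruct (cont01_extend g Hg) as [G [HG HGe]].
  apply (cont01_of_continuity G); auto.
  intros; rewrite <- E; auto.
Qed.

Lemma cont01_lin (a b : R) (g h : R -> R) :
  cont01 g -> cont01 h -> cont01 (fun x => a * g x + b * h x).
Proof.
  intros Hg Hh.
  destruct (cont01_extend g Hg) as [G [HG HGe]], (cont01_extend h Hh) as [H [HH HHe]].
  apply (cont01_of_continuity (fun x => a * G x + b * H x)); [reg |].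
  intros x Hx; rewrite HGe, HHe; auto.
Qed.

Lemma cont01_scal (a : R) (g : R -> R) : cont01 g -> cont01 (fun x => a * g x).
Proof.
  intros Hg; apply cont01_ext with (fun x => a * g x + 0 * g x); [apply cont01_lin; auto |].
  intros; ring.
Qed.

Lemma cont01_fsub (g h : R -> R) : cont01 g -> cont01 h -> cont01 (fsub g h).
Proof.
  intros Hg Hh; apply cont01_ext with (fun x => 1 * g x + (-1) * h x); [apply cont01_lin; auto |].
  intros; unfold fsub; ring.
Qed.

Lemma continuity_max01 (G : R -> R) :
  continuity G -> exists x0, I01 x0 /\ forall x, I01 x -> G x <= G x0.
Proof.
  intros HG; destruct (continuity_ab_maj G 0 1) as [m [Hm Hm']]; [lra | intros; apply HG |].
  exists m; split; [exact Hm' | intros x Hx; apply Hm, Hx].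
Qed.

Lemma continuity_abs_comp (G : R -> R) : continuity G -> continuity (fun x => Rabs (G x)).
Proof. intros HG; apply (continuity_comp G Rabs); [exact HG | apply Rcontinuity_abs]. Qed.

Lemma cont01_max_abs (g : R -> R) :
  cont01 g -> exists x0, I01 x0 /\ forall x, I01 x -> Rabs (g x) <= Rabs (g x0).
Proof.
  intros Hg; destruct (cont01_extend g Hg) as [G [HG HGe]].
  destruct (continuity_max01 _ (continuity_abs_comp G HG)) as [x0 [Hx0 Hmax]].
  exists x0; split; auto; intros x Hx; rewrite !HGe; auto.
Qed.

Lemma supnorm_ge (g : R -> R) (x : R) : cont01 g -> I01 x -> Rabs (g x) <= supnorm g.
Proof.
  intros Hg Hx; destruct (cont01_max_abs g Hg) as [x0 [_ Hmax]].
  apply (supnorm_spec g _ Hmax); auto.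
Qed.

Lemma supnorm_lt (g : R -> R) (E : R) :
  cont01 g -> (forall x, I01 x -> Rabs (g x) < E) -> supnorm g < E.
Proof.
  intros Hg HE; destruct (cont01_max_abs g Hg) as [x0 [Hx0 Hmax]].
  apply Rle_lt_trans with (Rabs (g x0)); auto; apply supnorm_le, Hmax.
Qed.

Lemma supnorm_scal (a : R) (g : R -> R) :
  cont01 g -> supnorm (fun x => a * g x) = Rabs a * supnorm g.
Proof.
  intros Hg; apply Rle_antisym.
  - apply supnorm_le; intros x Hx; rewrite Rabs_mult.
    apply Rmult_le_compat_l; [apply Rabs_pos | apply supnorm_ge; auto].
  - destruct (cont01_max_abs g Hg) as [x0 [Hx0 Hmax]].
    apply Rle_trans with (Rabs (a * g x0)).
    + rewrite Rabs_mult; apply Rmult_le_compat_l; [apply Rabs_pos | apply supnorm_le, Hmax].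
    + apply (supnorm_ge (fun x => a * g x)); auto; apply cont01_scal, Hg.
Qed.

(* [polyfun d p]: on all of R, [p] is a polynomial of degree at most [d], in Horner form. *)
Fixpoint polyfun (d : nat) (p : R -> R) : Prop :=
  match d with
  | O => exists c, forall x, p x = c
  | S d => exists c s, polyfun d s /\ forall x, p x = c + x * s x
  end.

Lemma polyfun_ext (d : nat) (p q : R -> R) :
  polyfun d p -> (forall x, p x = q x) -> polyfun d q.
Proof.
  destruct d as [| d]; simpl.
  - intros [c Hc] H; exists c; intros x; rewrite <- H; auto.
  - intros [c [s [Hs Hp]]] H; exists c, s; split; auto; intros x; rewrite <- H; auto.
Qed.

Lemma polyfun_const (d : nat) (a : R) : polyfun d (fun _ => a).
Proof.
  revert a; induction d as [| d IHd]; intros a; simpl.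
  - exists a; auto.
  - exists a, (fun _ => 0); split; [apply IHd | intros; ring].
Qed.

Lemma polyfun_succ (d : nat) (p : R -> R) : polyfun d p -> polyfun (S d) p.
Proof.
  revert p; induction d as [| d IHd]; intros p Hp.
  - destruct Hp as [c Hc]; exists c, (fun _ => 0); split; [exists 0; auto | intros; rewrite Hc; ring].
  - destruct Hp as [c [s [Hs Hp]]]; exists c, s; split; auto.
Qed.

Lemma polyfun_le (d e : nat) (p : R -> R) : (d <= e)%nat -> polyfun d p -> polyfun e p.
Proof. induction 1; auto; intros; apply polyfun_succ; auto. Qed.

Lemma polyfun_plus (d : nat) (p q : R -> R) :
  polyfun d p -> polyfun d q -> polyfun d (fun x => p x + q x).
Proof.
  revert p q; induction d as [| d IHd]; intros p q Hp Hq.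
  - destruct Hp as [a Ha], Hq as [b Hb]; exists (a + b); intros; rewrite Ha, Hb; auto.
  - destruct Hp as [a [s [Hs Hp]]], Hq as [b [t [Ht Hq]]].
    exists (a + b), (fun x => s x + t x); split; auto; intros; rewrite Hp, Hq; ring.
Qed.

Lemma polyfun_scal (d : nat) (a : R) (p : R -> R) :
  polyfun d p -> polyfun d (fun x => a * p x).
Proof.
  revert p; induction d as [| d IHd]; intros p Hp.
  - destruct Hp as [b Hb]; exists (a * b); intros; rewrite Hb; auto.
  - destruct Hp as [b [s [Hs Hp]]].
    exists (a * b), (fun x => a * s x); split; auto; intros; rewrite Hp; ring.
Qed.

Lemma polyfun_minus (d : nat) (p q : R -> R) :
  polyfun d p -> polyfun d q -> polyfun d (fun x => p x - q x).
Proof.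
  intros Hp Hq; apply polyfun_ext with (fun x => p x + (-1) * q x).
  - apply polyfun_plus, polyfun_scal; auto.
  - intros; ring.
Qed.

Lemma polyfun_mul_linear (d : nat) (a : R) (p : R -> R) :
  polyfun d p -> polyfun (S d) (fun x => (x - a) * p x).
Proof.
  revert p; induction d as [| d IHd]; intros p Hp.
  - destruct Hp as [c Hc]; exists (- a * c), (fun _ => c); split; [exists c; auto |].
    intros; rewrite Hc; ring.
  - destruct Hp as [c [s [Hs Hp]]].
    exists (- a * c), (fun x => c + (x - a) * s x); split.
    + apply polyfun_plus; [apply polyfun_const | apply IHd, Hs].
    + intros; rewrite Hp; ring.
Qed.

Lemma polyfun_factor (d : nat) (p : R -> R) (a : R) :
  polyfun (S d) p -> p a = 0 -> exists s, polyfun d s /\ forall x, p x = (x - a) * s x.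
Proof.
  revert p; induction d as [| d IHd]; intros p Hp Ha.
  - destruct Hp as [c [s [[b Hb] Hp]]]; exists (fun _ => b); split; [exists b; auto |].
    intros x; rewrite Hp, Hb in Ha; rewrite Hp, Hb; lra.
  - destruct Hp as [c [s [Hs Hp]]].
    destruct (IHd (fun x => s x - s a)) as [t [Ht Hst]].
    + apply polyfun_minus; auto; apply polyfun_const.
    + ring.
    + exists (fun x => s a + x * t x); split; [exists (s a), t; split; auto |].
      intros x; rewrite Hp in Ha |- *.
      assert (E : s x = s a + (x - a) * t x) by (rewrite <- Hst; ring).
      rewrite E; nra.
Qed.

Lemma polyfun_continuity (d : nat) (p : R -> R) : polyfun d p -> continuity p.
Proof.
  revert p; induction d as [| d IHd]; intros p Hp.
  - destruct Hp as [c Hc].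
    replace p with (fun _ : R => c) by (apply functional_extensionality; auto); reg.
  - destruct Hp as [c [s [Hs Hp]]].
    replace p with (fun x => c + x * s x) by (apply functional_extensionality; auto).
    specialize (IHd s Hs); reg.
Qed.

Lemma polyfun_roots (d : nat) (p : R -> R) :
  polyfun d p -> (exists x, I01 x /\ p x <> 0) ->
  exists L : list R, (length L <= d)%nat /\ forall x, I01 x -> p x = 0 -> In x L.
Proof.
  revert p; induction d as [| d IHd]; intros p Hp [x0 [Hx0 Hne]].
  - exists nil; split; auto.
    destruct Hp as [c Hc]; intros x _ Hx; rewrite Hc in Hx, Hne; contradiction.
  - destruct (classic (exists a, I01 a /\ p a = 0)) as [[a [Ha Hpa]] | Hno].
    + destruct (polyfun_factor d p a Hp Hpa) as [s [Hs Hps]].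
      destruct (IHd s Hs) as [L [HL HL']].
      { exists x0; split; auto; intros E; apply Hne; rewrite Hps, E; ring. }
      exists (a :: L); split; [simpl; lia |].
      intros x Hx Hpx; rewrite Hps in Hpx.
      destruct (Rmult_integral _ _ Hpx); [left; lra | right; auto].
    + exists nil; split; [simpl; lia |].
      intros x Hx Hpx; exfalso; apply Hno; eauto.
Qed.

Fixpoint root_prod (L : list R) (x : R) : R :=
  match L with
  | nil => 1
  | a :: L => (x - a) * root_prod L x
  end.

Lemma polyfun_root_prod (L : list R) : polyfun (length L) (root_prod L).
Proof.
  induction L as [| a L IHL]; simpl; [exists 1; auto | apply polyfun_mul_linear, IHL].
Qed.

Lemma root_prod_eq0 (L : list R) (z : R) : In z L -> root_prod L z = 0.
Proof.
  induction L as [| a L IHL]; simpl; intros H; [contradiction |].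
  destruct H as [-> | H]; [ring | rewrite IHL; auto; ring].
Qed.

Lemma root_prod_neq0 (L : list R) (z : R) : ~ In z L -> root_prod L z <> 0.
Proof.
  induction L as [| a L IHL]; simpl; intros H; [lra |].
  apply Rmult_integral_contrapositive; split.
  - intros E; apply H; left; lra.
  - apply IHL; auto.
Qed.

(* Newton's form of the interpolating polynomial. *)
Lemma polyfun_interpolation (v : R -> R) (L : list R) :
  exists q, polyfun (length L) q /\ forall z, In z L -> q z = v z.
Proof.
  induction L as [| a L [q [Hq Hqv]]].
  - exists (fun _ => 0); split; [exists 0; auto | intros z []].
  - destruct (classic (In a L)) as [Hin | Hnin].
    + exists q; split; [apply polyfun_succ, Hq |]; intros z [<- | Hz]; auto.
    + set (c := (v a - q a) / root_prod L a).
      exists (fun x => q x + c * root_prod L x); split.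
      * apply polyfun_succ, polyfun_plus; auto; apply polyfun_scal, polyfun_root_prod.
      * intros z [<- | Hz].
        -- unfold c; field; apply root_prod_neq0; auto.
        -- rewrite root_prod_eq0, Hqv; auto; ring.
Qed.

Lemma sum_monomials_S (c : nat -> R) (d : nat) (x : R) :
  sum_f_R0 (fun k => c k * x ^ k) (S d) = c O + x * sum_f_R0 (fun k => c (S k) * x ^ k) d.
Proof.
  induction d as [| d IHd]; [simpl; ring |].
  change (sum_f_R0 (fun k => c k * x ^ k) (S (S d))) with
    (sum_f_R0 (fun k => c k * x ^ k) (S d) + c (S (S d)) * x ^ (S (S d))).
  rewrite IHd; simpl; ring.
Qed.

Lemma polyfun_sum_monomials (d : nat) (c : nat -> R) :
  polyfun d (fun x => sum_f_R0 (fun k => c k * x ^ k) d).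
Proof.
  revert c; induction d as [| d IHd]; intros c.
  - exists (c O); intros; simpl; ring.
  - exists (c O), (fun x => sum_f_R0 (fun k => c (S k) * x ^ k) d); split.
    + apply (IHd (fun k => c (S k))).
    + intros; apply sum_monomials_S.
Qed.

Lemma polyfun_coefs (d : nat) (p : R -> R) :
  polyfun d p -> exists c : nat -> R, forall x, p x = sum_f_R0 (fun k => c k * x ^ k) d.
Proof.
  revert p; induction d as [| d IHd]; intros p Hp.
  - destruct Hp as [a Ha]; exists (fun _ => a); intros; simpl; rewrite Ha; ring.
  - destruct Hp as [a [s [Hs Hp]]]; destruct (IHd s Hs) as [b Hb].
    exists (fun k => match k with O => a | S k => b k end); intros x.
    rewrite sum_monomials_S, Hp, Hb; reflexivity.
Qed.

Lemma isPoly_polyfun (d : nat) (p : R -> R) :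
  isPoly d p -> exists P, polyfun d P /\ forall x, I01 x -> p x = P x.
Proof. intros [c Hc]; eexists; split; [apply (polyfun_sum_monomials d c) | exact Hc]. Qed.

Lemma polyfun_isPoly (d : nat) (p P : R -> R) :
  polyfun d P -> (forall x, I01 x -> p x = P x) -> isPoly d p.
Proof.
  intros HP H; destruct (polyfun_coefs d P HP) as [c Hc].
  exists c; intros x Hx; rewrite H, Hc; auto.
Qed.

Lemma isPoly_cont01 (d : nat) (p : R -> R) : isPoly d p -> cont01 p.
Proof.
  intros H; destruct (isPoly_polyfun d p H) as [P [HP HPe]].
  apply (cont01_of_continuity P); auto; apply (polyfun_continuity d), HP.
Qed.

Lemma isPoly_scal (d : nat) (a : R) (p : R -> R) :
  isPoly d p -> isPoly d (fun x => a * p x).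
Proof.
  intros Hp; destruct (isPoly_polyfun d p Hp) as [P [HP HPe]].
  apply (polyfun_isPoly d _ (fun x => a * P x)); [apply polyfun_scal, HP |].
  intros; rewrite HPe; auto.
Qed.

Lemma isPoly_fsub (d : nat) (p q : R -> R) :
  isPoly d p -> isPoly d q -> isPoly d (fsub p q).
Proof.
  intros Hp Hq.
  destruct (isPoly_polyfun d p Hp) as [P [HP HPe]], (isPoly_polyfun d q Hq) as [Q [HQ HQe]].
  apply (polyfun_isPoly d _ (fun x => P x - Q x)); [apply polyfun_minus; auto |].
  intros; unfold fsub; rewrite HPe, HQe; auto.
Qed.

Lemma isPoly_0 (p : R -> R) :
  isPoly 0 p <->
  exists t q, (forall x, I01 x -> q x = 0) /\ forall x, I01 x -> p x = q x + t * 1.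
Proof.
  split.
  - intros [c Hc]; exists (c O), (fun _ => 0); split; auto.
    intros x Hx; rewrite Hc; auto; simpl; ring.
  - intros [t [q [Hq Hp]]]; exists (fun _ => t); intros x Hx; rewrite Hp, Hq; auto; simpl; ring.
Qed.

Lemma isPoly_S (d : nat) (p : R -> R) :
  isPoly (S d) p <->
  exists t q, isPoly d q /\ forall x, I01 x -> p x = q x + t * x ^ (S d).
Proof.
  split.
  - intros [c Hc]; exists (c (S d)), (fun x => sum_f_R0 (fun k => c k * x ^ k) d); split.
    + exists c; auto.
    + intros x Hx; rewrite Hc; auto.
  - intros [t [q [[c Hc] Hp]]]; exists (fun k => if Nat.leb k d then c k else t).
    intros x Hx; rewrite Hp, Hc; auto.
    change (sum_f_R0 ?F (S d)) with (sum_f_R0 F d + F (S d)); cbv beta.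
    rewrite (proj2 (Nat.leb_gt (S d) d)) by lia.
    f_equal; apply sum_eq; intros i Hi.
    replace (Nat.leb i d) with true; auto; symmetry; apply Nat.leb_le; auto.
Qed.

Lemma pow_I01 (x : R) (k : nat) : I01 x -> 0 <= x ^ k <= 1.
Proof. intros [H0 H1]; induction k; simpl; nra. Qed.

Lemma continuity_eq0_at0 (u : R -> R) :
  continuity u -> (forall x, 0 < x <= 1 -> u x = 0) -> u 0 = 0.
Proof.
  intros Hu Hpos; apply NNPP; intros Hne.
  destruct (Hu 0 (Rabs (u 0))) as [a [Ha Ha']]; [apply Rabs_pos_lt, Hne |].
  set (y := Rmin (a / 2) 1).
  assert (Hy : 0 < y <= 1) by (unfold y, Rmin; destruct Rle_dec; lra).
  assert (y <= a / 2) by apply Rmin_l.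
  specialize (Ha' y); simpl in Ha'; unfold R_dist in Ha'.
  rewrite (Hpos y Hy), Rminus_0_l, Rabs_Ropp in Ha'.
  apply (Rlt_irrefl (Rabs (u 0))), Ha'.
  split; [split; [exact I | lra] | rewrite Rminus_0_r, Rabs_right; lra].
Qed.

Lemma monomial_not_polyfun (d : nat) (Q : R -> R) :
  polyfun d Q -> ~ (forall x, I01 x -> x ^ (S d) = Q x).
Proof.
  revert Q; induction d as [| d IHd]; intros Q HQ HE.
  - destruct HQ as [c Hc].
    pose proof (HE 0 I01_0); pose proof (HE 1 I01_1).
    rewrite Hc in *; simpl in *; lra.
  - destruct HQ as [c [s [Hs HQ]]].
    assert (Hc : c = 0) by (specialize (HE 0 I01_0); rewrite HQ in HE; simpl in HE; lra).
    (* dividing by x gives x ^ S d = s x on (0,1], and at 0 by continuity *)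
    assert (Hpos : forall x, 0 < x <= 1 -> x ^ (S d) - s x = 0).
    { intros x Hx; assert (Hx01 : I01 x) by (unfold I01; lra).
      specialize (HE x Hx01); rewrite HQ, Hc in HE.
      change (x ^ S (S d)) with (x * x ^ (S d)) in HE.
      apply (Rmult_eq_reg_l x); lra. }
    apply (IHd s Hs); intros x Hx.
    destruct (Req_dec x 0) as [-> | Hx0].
    + assert (Hs0 := continuity_eq0_at0 (fun x => x ^ (S d) - s x)).
      pose proof (polyfun_continuity d s Hs).
      cbv beta in Hs0; assert (0 ^ S d - s 0 = 0) by (apply Hs0; auto; reg); lra.
    + specialize (Hpos x); unfold I01 in Hx; lra.
Qed.

Definition best_in (V : (R -> R) -> Prop) (g p : R -> R) : Prop :=
  V p /\ forall q, V q -> supnorm (fsub g p) <= supnorm (fsub g q).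

Lemma best_in_iff (V V' : (R -> R) -> Prop) (g p : R -> R) :
  (forall q, V q <-> V' q) -> best_in V g p -> best_in V' g p.
Proof. intros E [H1 H2]; split; [apply E; auto | intros q Hq; apply H2, E; auto]. Qed.

Definition add_line (V : (R -> R) -> Prop) (m p : R -> R) : Prop :=
  exists t q, V q /\ forall x, I01 x -> p x = q x + t * m x.

Section BestApproxAddLine.

Variable V : (R -> R) -> Prop.
Hypothesis V_cont : forall q, V q -> cont01 q.
Hypothesis V_zero : V (fun _ => 0).
Hypothesis V_scal : forall a q, V q -> V (fun x => a * q x).
Hypothesis V_best : forall g, cont01 g -> exists q, best_in V g q.

Variable m : R -> R.
Hypothesis m_cont : cont01 m.
Hypothesis m_le1 : forall x, I01 x -> Rabs (m x) <= 1.
Hypothesis m_notin : forall q, V q -> exists x, I01 x /\ m x <> q x.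

Variable g : R -> R.
Hypothesis g_cont : cont01 g.

Let residual (t : R) : R -> R := fun x => g x - t * m x.

Let residual_cont (t : R) : cont01 (residual t).
Proof.
  apply cont01_ext with (fun x => 1 * g x + (- t) * m x); [apply cont01_lin; auto |].
  intros; unfold residual; ring.
Qed.

Let best_on (t : R) : R -> R :=
  epsilon (inhabits (fun _ : R => 0)) (best_in V (residual t)).

Let best_on_spec (t : R) : best_in V (residual t) (best_on t).
Proof. apply epsilon_spec, V_best, residual_cont. Qed.

Let line_dist (t : R) : R := supnorm (fsub (residual t) (best_on t)).

Let residual_le_dist (t : R) (x : R) (q : R -> R) :
  V q -> I01 x -> Rabs (g x - t * m x - q x) <= supnorm (fsub (residual t) q).
Proof.
  intros Hq Hx; apply (supnorm_ge (fsub (residual t) q)); auto.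
  apply cont01_fsub; auto.
Qed.

Lemma line_dist_lipschitz (t s : R) : line_dist t <= line_dist s + Rabs (t - s).
Proof.
  apply Rle_trans with (supnorm (fsub (residual t) (best_on s))).
  - apply (proj2 (best_on_spec t)), best_on_spec.
  - apply supnorm_le; intros x Hx.
    pose proof (residual_le_dist s x (best_on s) (proj1 (best_on_spec s)) Hx) as Hs.
    unfold fsub, residual.
    replace (g x - t * m x - best_on s x) with ((g x - s * m x - best_on s x) + (s - t) * m x)
      by ring.
    eapply Rle_trans; [apply Rabs_triang |]; rewrite Rabs_mult, (Rabs_minus_sym s t).
    pose proof (m_le1 x Hx); pose proof (Rabs_pos (t - s)).
    unfold line_dist; nra.
Qed.

Lemma line_dist_continuity : continuity line_dist.
Proof.
  intros c eps Heps; exists eps; split; auto; intros x [_ Hx]; simpl in *; unfold R_dist in *.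
  pose proof (line_dist_lipschitz x c) as Hxc; pose proof (line_dist_lipschitz c x) as Hcx.
  rewrite Rabs_minus_sym in Hcx; apply Rabs_def1; lra.
Qed.

Lemma line_dist_coercive :
  exists k, 0 < k /\ forall t, Rabs t * k <= line_dist t + supnorm g.
Proof.
  destruct (V_best m m_cont) as [qm [Hqm Bqm]].
  exists (supnorm (fsub m qm)); split.
  - destruct (m_notin qm Hqm) as [x [Hx Hne]].
    apply Rlt_le_trans with (Rabs (fsub m qm x)).
    + apply Rabs_pos_lt; unfold fsub; lra.
    + apply supnorm_ge; auto; apply cont01_fsub; auto.
  - intros t; destruct (Req_dec t 0) as [-> | Ht].
    + rewrite Rabs_R0, Rmult_0_l.
      pose proof (supnorm_nonneg (fsub (residual 0) (best_on 0))); pose proof (supnorm_nonneg g).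
      unfold line_dist; lra.
    + (* [t m + best_on t] is [t] times [m] minus a member of [V] *)
      assert (Hm : supnorm (fsub m qm) <= supnorm (fsub m (fun x => (- / t) * best_on t x)))
        by (apply Bqm, V_scal, best_on_spec).
      assert (Hscale : Rabs t * supnorm (fsub m (fun x => (- / t) * best_on t x)) =
                       supnorm (fun x => t * m x + best_on t x)).
      { rewrite <- supnorm_scal.
        - apply supnorm_ext; intros x _; unfold fsub; field; auto.
        - apply cont01_fsub; auto; apply cont01_scal, V_cont, best_on_spec. }
      assert (Htri : supnorm (fun x => t * m x + best_on t x) <= line_dist t + supnorm g).
      { apply supnorm_le; intros x Hx.
        pose proof (residual_le_dist t x (best_on t) (proj1 (best_on_spec t)) Hx).
        pose proof (supnorm_ge g x g_cont Hx).
        replace (t * m x + best_on t x) with (g x + - (g x - t * m x - best_on t x)) by ring.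
        eapply Rle_trans; [apply Rabs_triang |]; rewrite Rabs_Ropp; unfold line_dist; lra. }
      pose proof (Rabs_pos t); nra.
Qed.

Lemma line_dist_min : exists ts, forall t, line_dist ts <= line_dist t.
Proof.
  destruct line_dist_coercive as [k [Hk Hcoer]].
  set (T := (2 * supnorm g + 1) / k).
  assert (HT : 0 < T) by (pose proof (supnorm_nonneg g); apply Rdiv_lt_0_compat; lra).
  destruct (continuity_ab_min line_dist (- T) T) as [ts [Hmin Hts]];
    [lra | intros; apply line_dist_continuity |].
  assert (Hd0 : line_dist 0 <= supnorm g).
  { apply Rle_trans with (supnorm (fsub (residual 0) (fun _ => 0))).
    - apply best_on_spec, V_zero.
    - right; apply supnorm_ext; intros; unfold fsub, residual; ring. }
  exists ts; intros t; destruct (Rle_dec (Rabs t) T) as [Hle | Hgt].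
  - apply Hmin; unfold Rabs in Hle; destruct Rcase_abs; lra.
  - assert (line_dist ts <= line_dist 0) by (apply Hmin; lra).
    specialize (Hcoer t).
    assert (T * k = 2 * supnorm g + 1) by (unfold T; field; lra).
    assert (T * k < Rabs t * k) by (apply Rmult_lt_compat_r; lra).
    pose proof (supnorm_nonneg g); lra.
Qed.

Lemma best_in_add_line : exists p, best_in (add_line V m) g p.
Proof.
  destruct line_dist_min as [ts Hts].
  exists (fun x => best_on ts x + ts * m x); split.
  - exists ts, (best_on ts); split; auto; apply best_on_spec.
  - intros p [t [q [Hq Hp]]].
    apply Rle_trans with (line_dist t).
    + apply Rle_trans with (line_dist ts); auto.
      right; apply supnorm_ext; intros x _; unfold fsub, residual; ring.
    + apply Rle_trans with (supnorm (fsub (residual t) q)); [apply best_on_spec; auto |].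
      right; apply supnorm_ext; intros x Hx; unfold fsub, residual; rewrite Hp; auto; ring.
Qed.

End BestApproxAddLine.

Lemma best_approx_exists (d : nat) (g : R -> R) : cont01 g -> exists p, best_approx d g p.
Proof.
  revert g; induction d as [| d IHd]; intros g Hg.
  - set (Z := fun q : R -> R => forall x, I01 x -> q x = 0).
    assert (Z_cont : forall q, Z q -> cont01 q).
    { intros q Hq; apply (cont01_of_continuity (fun _ => 0)); [reg | auto]. }
    assert (Z_best : forall h, cont01 h -> exists q, best_in Z h q).
    { intros h _; exists (fun _ => 0); split; [intros x _; auto |].
      intros q Hq; right; apply supnorm_ext; intros x Hx; unfold fsub; rewrite Hq; auto. }
    assert (Z_scal : forall a q, Z q -> Z (fun x => a * q x)).
    { intros a q Hq x Hx; rewrite Hq; auto; ring. }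
    destruct (best_in_add_line Z Z_cont (fun x _ => eq_refl) Z_scal Z_best (fun _ => 1)) with g
      as [p Hp]; auto.
    + apply (cont01_of_continuity (fun _ => 1)); [reg | auto].
    + intros; rewrite Rabs_R1; lra.
    + intros q Hq; exists 0; split; [apply I01_0 | rewrite Hq; [lra | apply I01_0]].
    + exists p; apply (best_in_iff _ _ _ _ (fun q => iff_sym (isPoly_0 q)) Hp).
  - assert (V_zero : isPoly d (fun _ => 0)).
    { apply (polyfun_isPoly d _ (fun _ => 0)); [apply polyfun_const | auto]. }
    destruct (best_in_add_line (isPoly d) (isPoly_cont01 d) V_zero (isPoly_scal d) IHd
                (fun x => x ^ (S d))) with g as [p Hp]; auto.
    + apply (cont01_of_continuity (fun x => x ^ (S d))); [reg | auto].
    + intros x Hx; pose proof (pow_I01 x (S d) Hx); rewrite Rabs_right; lra.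
    + intros q Hq; destruct (isPoly_polyfun d q Hq) as [Q [HQ HQe]].
      apply NNPP; intros Hn; apply (monomial_not_polyfun d Q HQ); intros x Hx.
      rewrite <- HQe; auto; apply NNPP; intros Hne; apply Hn; eauto.
    + exists p; apply (best_in_iff _ _ _ _ (fun q => iff_sym (isPoly_S d q)) Hp).
Qed.

Lemma abs_midpoint_eq (a b E : R) :
  Rabs a <= E -> Rabs b <= E -> Rabs ((a + b) / 2) = E -> a = b.
Proof. unfold Rabs; repeat destruct Rcase_abs; intros; lra. Qed.

Lemma abs_sub_same_sign_lt (e w E : R) :
  0 < e * w -> Rabs e <= E -> Rabs w <= E -> Rabs (e - w) < E.
Proof.
  intros Hew; assert (Hsign : (0 < e /\ 0 < w) \/ (e < 0 /\ w < 0)).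
  { destruct (Rtotal_order e 0) as [? | [? | ?]]; destruct (Rtotal_order w 0) as [? | [? | ?]];
      subst; nra. }
  unfold Rabs; repeat destruct Rcase_abs; lra.
Qed.

Lemma peak_margin (e q : R -> R) (E : R) :
  continuity e -> continuity q -> 0 < E ->
  (forall x, I01 x -> Rabs (e x) <= E) ->
  (forall x, I01 x -> Rabs (e x) = E -> 0 < e x * q x) ->
  exists E', 0 <= E' < E /\ forall x, I01 x -> e x * q x <= 0 -> Rabs (e x) <= E'.
Proof.
  intros He Hq HE Hle Hpeak.
  (* [h] agrees with [|e|] where [e q <= 0] and stays below [E] everywhere *)
  set (h := fun x => Rabs (e x) - (e x * q x + Rabs (e x * q x)) / 2).
  assert (Hh : continuity h).
  { assert (continuity (fun x => Rabs (e x))) by (apply continuity_abs_comp, He).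
    assert (continuity (fun x => Rabs (e x * q x))) by (apply continuity_abs_comp; reg).
    unfold h; reg. }
  destruct (continuity_max01 h Hh) as [x1 [Hx1 Hmax]].
  assert (Hh1 : h x1 < E).
  { unfold h; specialize (Hle x1 Hx1).
    destruct (Req_dec (Rabs (e x1)) E) as [Heq | Hneq].
    - specialize (Hpeak x1 Hx1 Heq); rewrite (Rabs_right (e x1 * q x1)) by lra; lra.
    - pose proof (Rabs_pos (e x1 * q x1)); pose proof (Rle_abs (- (e x1 * q x1))).
      rewrite Rabs_Ropp in *; lra. }
  exists (Rmax 0 (h x1)); split; [split; [apply Rmax_l | apply Rmax_lub_lt; lra] |].
  intros x Hx Hneg; apply Rle_trans with (h x1); [| apply Rmax_r].
  replace (Rabs (e x)) with (h x); [apply Hmax, Hx |].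
  unfold h; rewrite (Rabs_left1 (e x * q x)) by auto; field.
Qed.

(* Kolmogorov's criterion: an error of size [E] can be strictly reduced in the direction [q]
   if [q] has the sign of the error wherever the error peaks. *)
Lemma error_decrease (e q : R -> R) (E : R) :
  continuity e -> continuity q -> 0 < E ->
  (forall x, I01 x -> Rabs (e x) <= E) ->
  (forall x, I01 x -> Rabs (e x) = E -> 0 < e x * q x) ->
  exists l, forall x, I01 x -> Rabs (e x - l * q x) < E.
Proof.
  intros He Hq HE Hle Hpeak.
  destruct (peak_margin e q E) as [E' [HE' Hmargin]]; auto.
  destruct (continuity_max01 _ (continuity_abs_comp q Hq)) as [xq [_ Hqmax]].
  set (B := Rabs (q xq) + 1).
  assert (HB : 0 < B) by (unfold B; pose proof (Rabs_pos (q xq)); lra).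
  set (l := (E - E') / (2 * B)).
  assert (Hl : 0 < l) by (apply Rdiv_lt_0_compat; lra).
  exists l; intros x Hx.
  assert (Hw : Rabs (l * q x) <= (E - E') / 2).
  { rewrite Rabs_mult, (Rabs_right l) by lra.
    apply Rle_trans with (l * B).
    - apply Rmult_le_compat_l; [lra |]; specialize (Hqmax x Hx); unfold B; lra.
    - right; unfold l; field; lra. }
  destruct (Rle_lt_dec (e x * q x) 0) as [Hneg | Hpos].
  - specialize (Hmargin x Hx Hneg).
    pose proof (Rabs_triang (e x) (- (l * q x))); rewrite Rabs_Ropp in *.
    unfold Rminus; lra.
  - apply abs_sub_same_sign_lt; auto; [| lra].
    replace (e x * (l * q x)) with (l * (e x * q x)) by ring; nra.
Qed.

(* The midpoint error peaks only where [P1 = P2]: finitely many points, at which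
   the direction [q] interpolates the error. *)
Lemma distinct_approx_improvable (d : nat) (F P1 P2 : R -> R) (E : R) :
  continuity F -> polyfun d P1 -> polyfun d P2 ->
  (forall x, I01 x -> Rabs (F x - P1 x) <= E) ->
  (forall x, I01 x -> Rabs (F x - P2 x) <= E) ->
  (exists x0, I01 x0 /\ P1 x0 <> P2 x0) ->
  exists P, polyfun d P /\ forall x, I01 x -> Rabs (F x - P x) < E.
Proof.
  intros HF HP1 HP2 Hle1 Hle2 [x0 [Hx0 Hne]].
  set (e := fun x => F x - (P1 x + P2 x) / 2).
  assert (He : continuity e).
  { pose proof (polyfun_continuity d P1 HP1); pose proof (polyfun_continuity d P2 HP2).
    unfold e; reg. }
  assert (He_le : forall x, I01 x -> Rabs (e x) <= E).
  { intros x Hx; specialize (Hle1 x Hx); specialize (Hle2 x Hx); unfold e.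
    revert Hle1 Hle2; unfold Rabs; repeat destruct Rcase_abs; intros; lra. }
  assert (HE : 0 < E).
  { specialize (Hle1 x0 Hx0); specialize (Hle2 x0 Hx0).
    revert Hle1 Hle2; unfold Rabs; repeat destruct Rcase_abs; intros; lra. }
  destruct (polyfun_roots d (fun x => P1 x - P2 x) (polyfun_minus d _ _ HP1 HP2))
    as [L [HL HLr]]; [exists x0; split; auto; lra |].
  destruct (polyfun_interpolation e L) as [q [Hq Hqe]].
  apply (polyfun_le _ d) in Hq; auto.
  destruct (error_decrease e q E) as [l Hl]; auto.
  - apply (polyfun_continuity d), Hq.
  - intros x Hx Hpeak; rewrite Hqe.
    + assert (Rabs (e x) * Rabs (e x) = e x * e x)
        by (rewrite <- Rabs_mult; apply Rabs_right, Rle_ge, Rle_0_sqr).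
      nra.
    + apply HLr; auto.
      assert (F x - P1 x = F x - P2 x); [| lra].
      apply (abs_midpoint_eq _ _ E); auto.
      rewrite <- Hpeak; unfold e; f_equal; field.
  - exists (fun x => / 2 * P1 x + / 2 * P2 x + l * q x); split.
    + apply polyfun_plus; [apply polyfun_plus | apply polyfun_scal]; try apply polyfun_scal; auto.
    + intros x Hx.
      replace (F x - (/ 2 * P1 x + / 2 * P2 x + l * q x)) with (e x - l * q x)
        by (unfold e; field).
      apply Hl, Hx.
Qed.

Lemma best_approx_unique (d : nat) (f p1 p2 : R -> R) :
  cont01 f -> best_approx d f p1 -> best_approx d f p2 -> forall x, I01 x -> p1 x = p2 x.
Proof.
  intros Hf [Hp1 B1] [Hp2 B2] x0 Hx0.
  destruct (isPoly_polyfun d p1 Hp1) as [P1 [HP1 HP1e]].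
  destruct (isPoly_polyfun d p2 Hp2) as [P2 [HP2 HP2e]].
  destruct (cont01_extend f Hf) as [F [HF HFe]].
  set (E := supnorm (fsub f p1)).
  assert (HE2 : supnorm (fsub f p2) = E) by (apply Rle_antisym; [apply B2 | apply B1]; auto).
  assert (Hle : forall p P, isPoly d p -> (forall x, I01 x -> p x = P x) ->
                  supnorm (fsub f p) = E -> forall x, I01 x -> Rabs (F x - P x) <= E).
  { intros p P Hp HPe HE x Hx; rewrite <- HFe, <- HPe, <- HE by auto.
    apply (supnorm_ge (fsub f p)); auto; apply cont01_fsub; auto; apply (isPoly_cont01 d), Hp. }
  apply NNPP; intros Hne.
  destruct (distinct_approx_improvable d F P1 P2 E) as [P [HP HPlt]]; auto.
  - exact (Hle p1 P1 Hp1 HP1e eq_refl).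
  - exact (Hle p2 P2 Hp2 HP2e HE2).
  - exists x0; rewrite <- HP1e, <- HP2e; auto.
  - assert (HPpoly : isPoly d P) by (apply (polyfun_isPoly d P P); auto).
    assert (supnorm (fsub f P) < E).
    { apply supnorm_lt; [apply cont01_fsub; auto; apply (isPoly_cont01 d), HPpoly |].
      intros x Hx; unfold fsub; rewrite HFe; auto. }
    specialize (B1 P HPpoly); fold E in B1; lra.
Qed.

Lemma best_approx_scal (d : nat) (a : R) (f p : R -> R) :
  cont01 f -> a <> 0 -> best_approx d f p ->
  best_approx d (fun x => a * f x) (fun x => a * p x).
Proof.
  intros Hf Ha [Hp Bp]; split; [apply isPoly_scal, Hp |]; intros q Hq.
  assert (Hdist : forall r, isPoly d r ->
            supnorm (fsub (fun x => a * f x) (fun x => a * r x)) = Rabs a * supnorm (fsub f r)).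
  { intros r Hr; rewrite <- supnorm_scal.
    - apply supnorm_ext; intros; unfold fsub; ring.
    - apply cont01_fsub; auto; apply (isPoly_cont01 d), Hr. }
  rewrite Hdist by auto.
  replace (supnorm (fsub (fun x => a * f x) q))
    with (supnorm (fsub (fun x => a * f x) (fun x => a * (/ a * q x)))).
  - rewrite Hdist by (apply isPoly_scal, Hq).
    apply Rmult_le_compat_l; [apply Rabs_pos | apply Bp, isPoly_scal, Hq].
  - apply supnorm_ext; intros; unfold fsub; field; auto.
Qed.

Lemma proj_spec (n : nat) (g : R -> R) : cont01 g -> best_approx n g (proj n g).
Proof. intros Hg; unfold proj; apply epsilon_spec, best_approx_exists, Hg. Qed.

Lemma proj_scal (n : nat) (a : R) (f : R -> R) :
  cont01 f -> a <> 0 -> forall x, I01 x -> proj n (fun x => a * f x) x = a * proj n f x.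
Proof.
  intros Hf Ha; apply (best_approx_unique n (fun x => a * f x)).
  - apply cont01_scal, Hf.
  - apply proj_spec, cont01_scal, Hf.
  - apply best_approx_scal, proj_spec; auto.
Qed.

Lemma dual_supnorm_pos (mu : (R -> R) -> R) (f : R -> R) :
  dual mu -> cont01 f -> mu f <> 0 -> 0 < supnorm f.
Proof.
  intros [_ [_ [M HM]]] Hf Hmuf; specialize (HM f Hf).
  destruct (Rle_lt_or_eq_dec 0 (supnorm f) (supnorm_nonneg f)) as [| E]; auto.
  rewrite <- E, Rmult_0_r in HM; pose proof (Rabs_pos_lt _ Hmuf); lra.
Qed.

Lemma small_same_sign (a delta C : R) :
  a <> 0 -> 0 < delta -> 0 <= C ->
  exists s, 0 < s * a /\ Rabs s < 1 /\ Rabs s * C < delta.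
Proof.
  intros Ha Hd HC; set (r := delta / (2 * (C + delta))).
  assert (Hr : 0 < r) by (apply Rdiv_lt_0_compat; lra).
  assert (Hr1 : r < 1) by (apply (Rmult_lt_reg_r (2 * (C + delta))); unfold r; field_simplify; lra).
  assert (HrC : r * C < delta).
  { apply (Rmult_lt_reg_r (2 * (C + delta))); [lra |]; unfold r; field_simplify; nra. }
  destruct (Rlt_or_le 0 a) as [Hpos | Hneg].
  - exists r; rewrite Rabs_right by lra; split; [nra | lra].
  - exists (- r); rewrite Rabs_Ropp, Rabs_right by lra; split; [| lra].
    assert (a < 0) by lra; nra.
Qed.

Lemma not_coderiv_of_perp (n : nat) (f : R -> R) (mu gamma : (R -> R) -> R) :
  cont01 f -> dual mu -> mu f <> 0 -> perp n gamma -> ~ coderiv n f gamma mu.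
Proof.
  intros Hf Hmu Hmuf [_ Hgamma] [_ Hcoderiv].
  set (p := proj n f).
  assert (Hnf := dual_supnorm_pos mu f Hmu Hf Hmuf).
  assert (Hnp := supnorm_nonneg p).
  (* along [g = (1 + s) f] the difference quotient is this positive constant *)
  set (K := Rabs (mu f) / (supnorm f + supnorm p)).
  assert (HK : 0 < K) by (apply Rdiv_lt_0_compat; [apply Rabs_pos_lt |]; lra).
  destruct (Hcoderiv (K / 2)) as [delta [Hdelta Hq]]; [lra |].
  destruct (small_same_sign (mu f) delta (supnorm f)) as [s [Hsmu [Hs1 Hsf]]]; auto; [lra |].
  assert (Hs : 0 < Rabs s) by (apply Rabs_pos_lt; intros ->; lra).
  set (g := fun x => (1 + s) * f x).
  assert (Hg : cont01 g) by apply cont01_scal, Hf.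
  assert (Hs1' : 1 + s <> 0) by (apply Rabs_def2 in Hs1; lra).
  assert (Efg : fsub g f = fun x => s * f x)
    by (apply functional_extensionality; intros x; unfold fsub, g; ring).
  assert (Hpg : forall x, I01 x -> fsub (proj n g) p x = s * p x).
  { intros x Hx; unfold fsub, g; rewrite proj_scal; auto; unfold p; ring. }
  assert (Ng : supnorm (fsub g f) = Rabs s * supnorm f) by (rewrite Efg; apply supnorm_scal, Hf).
  assert (Np : supnorm (fsub (proj n g) p) = Rabs s * supnorm p).
  { rewrite (supnorm_ext _ _ Hpg); apply supnorm_scal.
    apply (isPoly_cont01 n), proj_spec, Hf. }
  assert (Mg : mu (fsub g f) = s * mu f) by (rewrite Efg; apply Hmu, Hf).
  assert (Gp : gamma (fsub (proj n g) p) = 0).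
  { apply Hgamma, isPoly_fsub; apply proj_spec; auto. }
  specialize (Hq g Hg); fold p in Hq; rewrite Ng, Np, Mg, Gp, Rminus_0_r in Hq.
  assert (Equot : s * mu f / (Rabs s * supnorm f + Rabs s * supnorm p) = K).
  { assert (Hsign : s * mu f = Rabs s * Rabs (mu f))
      by (rewrite <- Rabs_mult; symmetry; apply Rabs_right; lra).
    unfold K; rewrite Hsign; field; split; [lra | nra]. }
  rewrite Equot in Hq; assert (K <= K / 2) by (apply Hq; split; nra); lra.
Qed.

Theorem theorem5p2 (n : nat) (f : R -> R) (mu : (R -> R) -> R) :
  (0 < n)%nat -> cont01 f -> dual mu -> mu f <> 0 ->
  (forall gamma, perp n gamma -> ~ coderiv n f gamma mu) /\
  (perp n mu -> ~ coderiv n f mu mu).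
Proof.
  intros _ Hf Hmu Hmuf; split.
  - intros gamma; apply not_coderiv_of_perp; auto.
  - apply not_coderiv_of_perp; auto.
Qed.
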